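(* Let $s$ be a closed term with $s\succ^k t$ for some abstraction $t$. Then the heap machine satisfies $\sigma_s\succ^{4k+2}([],[g],H)$ for some closure $g$ and heap $H$ with $g\gg_H t$.
   Context: Terms (de Bruijn): $s::=n\mid st\mid\lambda s$; $s$ is closed if all its free de Bruijn indices are... none (i.e. every index $n$ occurring under $d$ binders satisfies $n<d$). Term substitution: $k^k_u=u$, $n^k_u=n$ ($n\ne k$), $(st)^k_u=(s^k_u)(t^k_u)$, $(\lambda s)^k_u=\lambda(s^{k+1}_u)$. Reduction: $(\lambda s)(\lambda t)\succ s^0_{\lambda t}$; $s\succ s'\Rightarrow st\succ s't$; $t\succ t'\Rightarrow(\lambda s)t\succ(\lambda s)t'$. Programs: lists of commands $\mathsf{ret},\mathsf{var}\,n,\mathsf{lam},\mathsf{app}$. Compilation: $\gamma n=[\mathsf{var}\,n]$, $\gamma(st)=\gamma s++\gamma t++[\mathsf{app}]$, $\gamma(\lambda s)=\mathsf{lam}::\gamma s++[\mathsf{ret}]$. $P\gg s$ iff $P=\gamma u$ and $s=\lambda u$. $\varphi P:=\varphi_{0,[]}P$ with $\varphi_{0,Q}(\mathsf{ret}::P)=(Q,P)$, $\varphi_{k+1,Q}(\mathsf{ret}::P)=\varphi_{k,Q++[\mathsf{ret}]}P$, $\varphi_{k,Q}(\mathsf{lam}::P)=\varphi_{k+1,Q++[\mathsf{lam}]}P$, $\varphi_{k,Q}(c::P)=\varphi_{k,Q++[c]}P$ for $c$ a $\mathsf{var}$ or $\mathsf{app}$, undefined otherwise. Addresses are natural numbers;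 a closure is a pair $(P,a)$ of a program and an address; a heap entry is a pair $(g,b)$ of a closure and an address; a heap $H$ is a list of heap entries; $H[a]$ is the $a$-th entry of $H$ for $1\le a\le|H|$ (undefined otherwise, in particular for $a=0$). Lookup: if $H[a]=(g,b)$ then $H[a,0]=g$ and $H[a,n+1]=H[b,n]$; otherwise $H[a,n]$ is undefined. Unfolding $\langle s,a\rangle\triangleright^H_k s'$ is defined inductively: $\langle n,a\rangle\triangleright^H_k n$ if $n<k$; $\langle n,a\rangle\triangleright^H_k s'$ if $n\ge k$, $H[a,n-k]=(P,b)$, $P\gg u$ and $\langle u,b\rangle\triangleright^H_0 s'$; $\langle\lambda s,a\rangle\triangleright^H_k\lambda s'$ if $\langle s,a\rangle\triangleright^H_{k+1}s'$; $\langle st,a\rangle\triangleright^H_k s't'$ if $\langle s,a\rangle\triangleright^H_k s'$ and $\langle t,a\rangle\triangleright^H_k t'$. A closure represents a term, $(P,a)\gg_H s$, iff $P\gg u$ and $\langle u,a\rangle\triangleright^H_0 s$ for some $u$. The heap machine has states $(T,V,H)$ with $T,V$ lists of closures and steps: $((\mathsf{var}\,n::P,a)::T,V,H)\succ((P,a)::T,g::V,H)$ if $H[a,n]=g$; $((\mathsf{lam}::P,a)::T,V,H)\succ((P',a)::T,(Q,a)::V,H)$ if $\varphi P=(Q,P')$; $((\mathsf{app}::P,a)::T,g::(Q,b)::V,H)\succ((Q,|H|+1)::(P,a)::T,V,H++[(g,b)])$; $(([],a)::T,V,H)\succ(T,V,H)$. The initial state is $\sigma_s:=([(\gamma s,0)],[],[])$.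 *)

From Stdlib Require Import List Arith Lia.
Import ListNotations.

Inductive term : Type :=
| var (n : nat)
| app (s t : term)
| lam (s : term).

Inductive bound : nat -> term -> Prop :=
| boundVar k n : n < k -> bound k (var n)
| boundApp k s t : bound k s -> bound k t -> bound k (app s t)
| boundLam k s : bound (S k) s -> bound k (lam s).

Definition closed (s : term) : Prop := bound 0 s.

Fixpoint subst (s : term) (k : nat) (u : term) : term :=
  match s with
  | var n => if Nat.eqb n k then u else var n
  | app s1 s2 => app (subst s1 k u) (subst s2 k u)
  | lam s1 => lam (subst s1 (S k) u)
  end.

Inductive step : term -> term -> Prop :=
| stepBeta s t : step (app (lam s) (lam t)) (subst s 0 (lam t))
| stepAppL s s' t : step s s' -> step (app s t) (app s' t)
| stepAppR s t t' : step t t' -> step (app (lam s) t) (app (lam s) t').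

Inductive pow {X : Type} (R : X -> X -> Prop) : nat -> X -> X -> Prop :=
| powZero x : pow R 0 x x
| powSucc n x y z : R x y -> pow R n y z -> pow R (S n) x z.

Inductive com : Type :=
| retC
| varC (n : nat)
| lamC
| appC.

Definition Pro := list com.

Fixpoint gamma (s : term) : Pro :=
  match s with
  | var n => [varC n]
  | app s t => gamma s ++ gamma t ++ [appC]
  | lam s => lamC :: gamma s ++ [retC]
  end.

Definition represents (P : Pro) (s : term) : Prop :=
  exists u, P = gamma u /\ s = lam u.

Fixpoint jumpTarget (k : nat) (Q : Pro) (P : Pro) : option (Pro * Pro) :=
  match P with
  | retC :: P' => match k with
                  | 0 => Some (Q, P')
                  | S k' => jumpTarget k' (Q ++ [retC]) P'
                  end
  | lamC :: P' => jumpTarget (S k) (Q ++ [lamC]) P'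
  | c :: P' => jumpTarget k (Q ++ [c]) P'
  | [] => None
  end.

Definition phi (P : Pro) : option (Pro * Pro) := jumpTarget 0 [] P.

Definition clo : Type := (Pro * nat)%type.
Definition heapEntry : Type := (clo * nat)%type.
Definition heap : Type := list heapEntry.

(* H[a] for 1 <= a <= |H|, undefined otherwise *)
Definition heapGet (H : heap) (a : nat) : option heapEntry :=
  match a with
  | 0 => None
  | S a' => nth_error H a'
  end.

Fixpoint lookup (H : heap) (a : nat) (n : nat) : option clo :=
  match heapGet H a with
  | Some (g, b) => match n with
                   | 0 => Some g
                   | S n' => lookup H b n'
                   end
  | None => None
  end.

Inductive unfolds (H : heap) : nat -> nat -> term -> term -> Prop :=
| unfoldsBound a k n : n < k -> unfolds H a k (var n) (var n)
| unfoldsBind a k n P b u s' :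
    k <= n -> lookup H a (n - k) = Some (P, b) -> represents P u ->
    unfolds H b 0 u s' -> unfolds H a k (var n) s'
| unfoldsLam a k s s' : unfolds H a (S k) s s' -> unfolds H a k (lam s) (lam s')
| unfoldsApp a k s t s' t' :
    unfolds H a k s s' -> unfolds H a k t t' -> unfolds H a k (app s t) (app s' t').

Definition reprC (H : heap) (g : clo) (s : term) : Prop :=
  exists u, represents (fst g) u /\ unfolds H (snd g) 0 u s.

Definition state : Type := (list clo * list clo * heap)%type.

Inductive stepH : state -> state -> Prop :=
| stepVar P a n T V H g :
    lookup H a n = Some g ->
    stepH ((varC n :: P, a) :: T, V, H) ((P, a) :: T, g :: V, H)
| stepLam P a T V H Q P' :
    phi P = Some (Q, P') ->
    stepH ((lamC :: P, a) :: T, V, H) ((P', a) :: T, (Q, a) :: V, H)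
| stepApp P a T g Q b V H :
    stepH ((appC :: P, a) :: T, g :: (Q, b) :: V, H)
          ((Q, S (length H)) :: (P, a) :: T, V, H ++ [(g, b)])
| stepNil a T V H :
    stepH (([], a) :: T, V, H) (T, V, H).

Definition init (s : term) : state := ([(gamma s, 0)], [], []).

(* Invariant: if the code of s, run in environment a, unfolds to a term that
   reduces in k steps to an abstraction, then after 4k+1 machine steps the
   closure of that abstraction is on top of the value stack and the heap has
   only been extended.  A variable or an abstraction takes a single var/lam
   step.  The reduction of an application splits as k = k1 + k2 + 1 + k3
   (function, argument, beta, body); the app step allocates a frame binding
   the argument closure, under which the code of the function body unfolds to
   the contractum, and the body frame is popped by one more step.  The
   initial frame is popped by the final step. *)
From Pilot Require Import Defs.
From Stdlib Require Import List Arith Lia.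
Import ListNotations.

Lemma pow_add {X} (R : X -> X -> Prop) n m x y z :
  pow R n x y -> pow R m y z -> pow R (n + m) x z.
Proof.
  induction 1; intros; simpl; auto.
  econstructor; eauto.
Qed.

Lemma pow_one {X} (R : X -> X -> Prop) x y : R x y -> pow R 1 x y.
Proof. intros; econstructor; eauto; constructor. Qed.

Lemma pow_step_lam k s t : pow step k (lam s) t -> k = 0 /\ t = lam s.
Proof.
  intros Hp; inversion Hp as [|? ? ? ? Hst]; subst; auto.
  inversion Hst.
Qed.

Lemma pow_step_app_inv k s t v :
  pow step k (Defs.app s t) v -> (exists w, v = lam w) ->
  exists k1 k2 k3 a b,
    pow step k1 s (lam a) /\ pow step k2 t (lam b) /\
    pow step k3 (subst a 0 (lam b)) v /\ k = k1 + k2 + S k3.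
Proof.
  revert s t; induction k as [|k IH]; intros s t Hp [w ->].
  - inversion Hp.
  - inversion Hp as [|? ? y ? Hst Hrest]; subst.
    inversion Hst; subst.
    + exists 0, 0, k, s0, t0. repeat split; try constructor; auto.
    + destruct (IH _ _ Hrest (ex_intro _ w eq_refl))
        as (k1 & k2 & k3 & a & b & Hs & Ht & Hbody & ->).
      exists (S k1), k2, k3, a, b. repeat split; auto. econstructor; eauto.
    + destruct (IH _ _ Hrest (ex_intro _ w eq_refl))
        as (k1 & k2 & k3 & a & b & Hs & Ht & Hbody & ->).
      apply pow_step_lam in Hs as [-> Hs]. injection Hs as ->.
      exists 0, (S k2), k3, s0, b. repeat split; auto.
      * constructor.
      * econstructor; eauto.
Qed.

Lemma jumpTarget_gamma s : forall k Q P,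
  jumpTarget k Q (gamma s ++ P) = jumpTarget k (Q ++ gamma s) P.
Proof.
  induction s; intros; simpl; rewrite <- ?app_assoc.
  - reflexivity.
  - rewrite IHs1, IHs2. simpl. rewrite <- !app_assoc. reflexivity.
  - rewrite IHs. simpl. rewrite <- !app_assoc. reflexivity.
Qed.

Lemma phi_gamma s P : phi (gamma s ++ retC :: P) = Some (gamma s, P).
Proof. unfold phi. rewrite jumpTarget_gamma. reflexivity. Qed.

Lemma heapGet_app H H' a e :
  heapGet H a = Some e -> heapGet (H ++ H') a = Some e.
Proof.
  destruct a; simpl; try discriminate. intros E.
  rewrite nth_error_app1; auto. apply nth_error_Some. congruence.
Qed.

Lemma lookup_app H H' n : forall a g,
  lookup H a n = Some g -> lookup (H ++ H') a n = Some g.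
Proof.
  induction n; intros a g E; simpl in *;
    destruct (heapGet H a) as [[g0 b]|] eqn:Ea; try discriminate;
    rewrite (heapGet_app _ H' _ _ Ea); auto.
Qed.

Lemma unfolds_app H H' a k s t : unfolds H a k s t -> unfolds (H ++ H') a k s t.
Proof.
  induction 1; econstructor; eauto using lookup_app.
Qed.

Lemma reprC_app H H' g s : reprC H g s -> reprC (H ++ H') g s.
Proof. intros [u [Hr Hu]]. exists u; auto using unfolds_app. Qed.

Lemma reprC_lam H g s : reprC H g s -> exists w, s = lam w.
Proof.
  intros [u [[u' [_ ->]] Hu]]. inversion Hu; eauto.
Qed.

Lemma bound_mono k s : bound k s -> forall k', k <= k' -> bound k' s.
Proof.
  induction 1; intros; constructor; auto; try lia. apply IHbound; lia.
Qed.

Lemma unfolds_bound H a k s t : unfolds H a k s t -> bound k t.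
Proof.
  induction 1; try (constructor; auto; fail).
  eapply bound_mono; eauto; lia.
Qed.

Lemma bound_unfolds H a k s : bound k s -> unfolds H a k s s.
Proof. induction 1; constructor; auto. Qed.

Lemma subst_bound k s : bound k s -> forall m u, k <= m -> subst s m u = s.
Proof.
  induction 1; intros m u Hm; simpl.
  - destruct (Nat.eqb_spec n m); auto; lia.
  - rewrite IHbound1, IHbound2; auto.
  - rewrite IHbound; auto; lia.
Qed.

(* Index k is the innermost free index of the unfolding; the frame c binding
   it to g has the old environment b as parent, so the indices beyond k are
   shifted by one. *)
Lemma unfolds_subst H b c g v k u t :
  unfolds H b (S k) u t -> heapGet H c = Some (g, b) -> reprC H g v ->
  unfolds H c k u (subst t k v).
Proof.
  intros Hu Hc Hg. remember (S k) as k' eqn:Ek. revert k Ek.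
  induction Hu; intros k0 Ek; subst; simpl.
  - destruct (Nat.eqb_spec n k0).
    + subst. destruct Hg as [u' [Hr Hu']]. destruct g as [P' b'].
      eapply unfoldsBind with (P := P') (b := b'); eauto.
      rewrite Nat.sub_diag. simpl. rewrite Hc. reflexivity.
    + constructor. lia.
  - rewrite (subst_bound 0 s'); [| eapply unfolds_bound; eauto | lia].
    eapply unfoldsBind; eauto; [lia|].
    replace (n - k0) with (S (n - S k0)) by lia. simpl. rewrite Hc. auto.
  - constructor. auto.
  - constructor; auto.
Qed.

Lemma reprC_beta H Q b g a v :
  reprC H (Q, b) (lam a) -> reprC H g v ->
  exists u, Q = gamma u /\
    unfolds (H ++ [(g, b)]) (S (length H)) 0 u (subst a 0 v).
Proof.
  intros [w [[u [HQ ->]] Hw]] Hg. simpl in HQ, Hw. subst Q. exists u. split; auto.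
  inversion Hw; subst.
  eapply unfolds_subst; eauto using unfolds_app, reprC_app.
  simpl. rewrite nth_error_app2, Nat.sub_diag; auto.
Qed.

Definition machine_evaluates (k : nat) (s : term) : Prop :=
  forall a H sb tb P T V,
    unfolds H a 0 s sb -> pow step k sb tb -> (exists w, tb = lam w) ->
    exists g H',
      pow stepH (4 * k + 1) ((gamma s ++ P, a) :: T, V, H)
                            ((P, a) :: T, g :: V, H ++ H') /\
      reprC (H ++ H') g tb.

Lemma machine_evaluates_value k s :
  (forall a H sb P T V, unfolds H a 0 s sb ->
     exists g, stepH ((gamma s ++ P, a) :: T, V, H) ((P, a) :: T, g :: V, H) /\
               reprC H g sb) ->
  machine_evaluates k s.
Proof.
  intros Hstep a H sb tb P T V Hu Hp _.
  destruct (Hstep a H sb P T V Hu) as (g & Hs & Hg).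
  destruct (reprC_lam _ _ _ Hg) as [w ->].
  apply pow_step_lam in Hp as [-> ->].
  exists g, []. rewrite app_nil_r. split; auto using pow_one.
Qed.

Lemma machine_evaluates_var k n : machine_evaluates k (var n).
Proof.
  apply machine_evaluates_value. intros a H sb P T V Hu.
  inversion Hu as [| ? ? ? Q b u ? _ Hl Hr Hub | |]; subst; [lia|].
  exists (Q, b). split.
  - constructor. rewrite Nat.sub_0_r in Hl. exact Hl.
  - exists u. auto.
Qed.

Lemma machine_evaluates_lam k s : machine_evaluates k (lam s).
Proof.
  apply machine_evaluates_value. intros a H sb P T V Hu.
  exists (gamma s, a). split.
  - simpl. rewrite <- app_assoc. constructor. apply phi_gamma.
  - exists (lam s). split; auto. exists s. auto.
Qed.

Lemma machine_evaluates_app k s1 s2 :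
  (forall j s, j < k -> machine_evaluates j s) -> machine_evaluates k (Defs.app s1 s2).
Proof.
  intros IH a H sb tb P T V Hu Hp Hv.
  inversion Hu as [| | | ? ? ? ? sb1 sb2 Hu1 Hu2]; subst.
  destruct (pow_step_app_inv _ _ _ _ Hp Hv)
    as (k1 & k2 & k3 & a1 & b1 & Hp1 & Hp2 & Hp3 & ->).
  destruct (IH k1 s1 ltac:(lia) a H _ _ (gamma s2 ++ appC :: P) T V Hu1 Hp1)
    as ([Q b] & H1 & Hrun1 & Hg1); eauto.
  destruct (IH k2 s2 ltac:(lia) a (H ++ H1) _ _ (appC :: P) T ((Q, b) :: V)
              (unfolds_app _ _ _ _ _ _ Hu2) Hp2)
    as (g2 & H2 & Hrun2 & Hg2); eauto.
  set (H12 := (H ++ H1) ++ H2).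
  destruct (reprC_beta H12 Q b g2 a1 (lam b1) (reprC_app _ _ _ _ Hg1) Hg2)
    as (u & -> & Hbody).
  destruct (IH k3 u ltac:(lia) _ _ _ _ [] ((P, a) :: T) V Hbody Hp3 Hv)
    as (g3 & H3 & Hrun3 & Hg3).
  exists g3, (H1 ++ H2 ++ [(g2, b)] ++ H3).
  simpl gamma. rewrite <- !app_assoc.
  replace (H ++ H1 ++ H2 ++ [(g2, b)] ++ H3) with ((H12 ++ [(g2, b)]) ++ H3)
    by (unfold H12; rewrite <- !app_assoc; reflexivity).
  split; auto.
  replace (4 * (k1 + k2 + S k3) + 1)
    with ((4 * k1 + 1) + ((4 * k2 + 1) + (1 + ((4 * k3 + 1) + 1)))) by lia.
  rewrite app_nil_r in Hrun3.
  eapply pow_add; [exact Hrun1|].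
  eapply pow_add; [exact Hrun2|].
  econstructor; [constructor|].
  eapply pow_add; [exact Hrun3|].
  apply pow_one. constructor.
Qed.

Lemma machine_evaluates_all k s : machine_evaluates k s.
Proof.
  revert s. induction k as [k IH] using (well_founded_induction lt_wf).
  intros [n | s1 s2 | s].
  - apply machine_evaluates_var.
  - apply machine_evaluates_app. intros j s Hj. exact (IH j Hj s).
  - apply machine_evaluates_lam.
Qed.

Theorem theorem16 (s t : term) (k : nat) :
  closed s -> pow step k s t -> (exists u, t = lam u) ->
  exists (g : clo) (H : heap),
    pow stepH (4 * k + 2) (init s) ([], [g], H) /\ reprC H g t.
Proof.
  intros Hc Hp Hv.
  destruct (machine_evaluates_all k s 0 [] s t [] [] [] (bound_unfolds _ _ _ _ Hc) Hp Hv)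
    as (g & H & Hrun & Hg).
  exists g, H. split; [|exact Hg].
  replace (4 * k + 2) with ((4 * k + 1) + 1) by lia.
  unfold init. rewrite <- (app_nil_r (gamma s)).
  eapply pow_add; [exact Hrun|]. apply pow_one. constructor.
Qed.
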